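(* Let $T:\mathbb{Z}\to\mathbb{Z}$ be defined by $T(n)=n/2$ if $n$ is even and $T(n)=(3n+1)/2$ if $n$ is odd, and let $T_R:\mathbb{Z}\to\mathbb{Z}$ be defined by $$T_R(n)=\begin{cases}\dfrac{3n}{4}, & n\equiv 0\pmod 4,\\[2pt] \dfrac{n-2}{4}, & n\equiv 2\pmod 4,\\[2pt] \dfrac{3n+1}{2}, & n\equiv 1\pmod 2.\end{cases}$$ Then the following are equivalent: (a) for every positive integer $n$, some iterate $T^k(n)$ equals $1$ (the $3x+1$ conjecture); (b) for every integer $n\ge 0$, the $T_R$-trajectory of $n$ converges to $0$, i.e., $T_R^k(n)=0$ for some $k\ge 0$.
   Context: Iterates are defined by $f^0(n)=n$, $f^{k+1}(n)=f(f^k(n))$; the $f$-trajectory of $n$ is $(f^k(n))_{k\ge0}$. Note $0$ is a fixed point of $T_R$. *)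

From Stdlib Require Import ZArith.
Open Scope Z_scope.

Definition T (n : Z) : Z :=
  if Z.even n then n / 2 else (3 * n + 1) / 2.

Definition T_R (n : Z) : Z :=
  if Z.odd n then (3 * n + 1) / 2
  else if n mod 4 =? 0 then (3 * n) / 4
  else (n - 2) / 4.

Fixpoint iterate (f : Z -> Z) (k : nat) (n : Z) : Z :=
  match k with
  | O => n
  | S k' => f (iterate f k' n)
  end.

(** The affine embedding [n |-> 3n+2] turns [T_R] into an accelerated version of [T]:
    one [T_R]-step on [n] is one or two [T]-steps on [3n+2].  Since [3*0+2 = 2] and
    [T 2 = 1], a [T_R]-trajectory from [n] reaching [0] yields a [T]-trajectory from
    [3n+2] reaching [1]; conversely a [T]-trajectory from [3n+2] ends in the cycle
    [1 -> 2 -> 1], and [3m+2] lies on that cycle only for [m = 0].  Every odd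
    [2k+1] is sent by [T] to [3k+2], and even numbers are halved, so strong induction
    covers all positive integers. *)
From Stdlib Require Import ZArith Lia.
Open Scope Z_scope.

Lemma iterate_add (f : Z -> Z) (a b : nat) (n : Z) :
  iterate f (a + b) n = iterate f a (iterate f b n).
Proof. induction a as [|a IH]; simpl; congruence. Qed.

Lemma iterate_succ_r (f : Z -> Z) (k : nat) (n : Z) :
  iterate f (S k) n = iterate f k (f n).
Proof. now rewrite <- Nat.add_1_r, iterate_add. Qed.

Definition reaches (f : Z -> Z) (n m : Z) : Prop := exists k : nat, iterate f k n = m.

Lemma reaches_trans (f : Z -> Z) (n m p : Z) :
  reaches f n m -> reaches f m p -> reaches f n p.
Proof.
  intros [a Ha] [b Hb]; exists (b + a)%nat.
  now rewrite iterate_add, Ha.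
Qed.

Lemma reaches_step (f : Z -> Z) (n m : Z) : reaches f (f n) m -> reaches f n m.
Proof. intros [k Hk]; exists (S k); now rewrite iterate_succ_r. Qed.

Section Simulation.

Variables (f g phi : Z -> Z).

Hypothesis simulation_step :
  forall x, exists j : nat, (1 <= j)%nat /\ iterate f j (phi x) = phi (g x).

Lemma iterate_simulation (k : nat) (x : Z) :
  exists t : nat, (k <= t)%nat /\ iterate f t (phi x) = phi (iterate g k x).
Proof.
  induction k as [|k [t [Hkt Ht]]].
  - now exists 0%nat.
  - destruct (simulation_step (iterate g k x)) as [j [Hj Hstep]].
    exists (j + t)%nat; split; [lia|].
    now rewrite iterate_add, Ht.
Qed.

Lemma reaches_simulation (x y : Z) : reaches g x y -> reaches f (phi x) (phi y).
Proof.
  intros [k <-]; destruct (iterate_simulation k x) as [t [_ Ht]].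
  now exists t.
Qed.

End Simulation.

Lemma T_double (k : Z) : T (2 * k) = k.
Proof.
  unfold T; rewrite Z.even_mul; cbn -[Z.mul Z.div Z.add Z.sub].
  symmetry; apply Z.div_unique_exact; lia.
Qed.

Lemma T_double_add1 (k : Z) : T (2 * k + 1) = 3 * k + 2.
Proof.
  unfold T; rewrite Z.even_add, Z.even_mul; cbn -[Z.mul Z.div Z.add Z.sub].
  symmetry; apply Z.div_unique_exact; lia.
Qed.

Lemma T_R_double_add1 (k : Z) : T_R (2 * k + 1) = 3 * k + 2.
Proof.
  unfold T_R; rewrite Z.odd_add, Z.odd_mul; cbn -[Z.mul Z.div Z.add Z.sub].
  symmetry; apply Z.div_unique_exact; lia.
Qed.

Lemma T_R_mul4 (q : Z) : T_R (4 * q) = 3 * q.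
Proof.
  unfold T_R; rewrite Z.odd_mul, (Z.mul_comm 4 q), Z.mod_mul by lia; cbn -[Z.mul Z.div Z.add Z.sub].
  symmetry; apply Z.div_unique_exact; lia.
Qed.

Lemma T_R_mul4_add2 (q : Z) : T_R (4 * q + 2) = q.
Proof.
  unfold T_R; rewrite Z.odd_add, Z.odd_mul, (Z.add_comm (4 * q) 2), (Z.mul_comm 4 q), Z.mod_add by lia.
  cbn -[Z.mul Z.div Z.add Z.sub]; symmetry; apply Z.div_unique_exact; lia.
Qed.

Lemma T_simulates_T_R (n : Z) :
  exists j : nat, (1 <= j)%nat /\ iterate T j (3 * n + 2) = 3 * T_R n + 2.
Proof.
  destruct (Z.Even_or_Odd n) as [[m ->] | [k ->]].
  - exists 2%nat; split; [lia|]; cbn [iterate].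
    destruct (Z.Even_or_Odd m) as [[q ->] | [q ->]].
    + replace (2 * (2 * q)) with (4 * q) by ring; rewrite T_R_mul4.
      replace (3 * (4 * q) + 2) with (2 * (2 * (3 * q) + 1)) by ring.
      now rewrite T_double, T_double_add1.
    + replace (2 * (2 * q + 1)) with (4 * q + 2) by ring; rewrite T_R_mul4_add2.
      replace (3 * (4 * q + 2) + 2) with (2 * (2 * (3 * q + 2))) by ring.
      now rewrite !T_double.
  - exists 1%nat; split; [lia|]; cbn [iterate].
    rewrite T_R_double_add1.
    replace (3 * (2 * k + 1) + 2) with (2 * (3 * k + 2) + 1) by ring.
    apply T_double_add1.
Qed.

Lemma iterate_T_1 (i : nat) : iterate T i 1 = 1 \/ iterate T i 1 = 2.
Proof.
  induction i as [|i [E | E]]; cbn [iterate].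
  - now left.
  - rewrite E; now right.
  - rewrite E; now left.
Qed.

Lemma T_R_converges_of_collatz :
  (forall n : Z, 0 < n -> reaches T n 1) ->
  forall n : Z, 0 <= n -> reaches T_R n 0.
Proof.
  intros collatz n Hn.
  destruct (collatz (3 * n + 2)) as [K HK]; [lia|].
  destruct (iterate_simulation T T_R (fun x => 3 * x + 2) T_simulates_T_R K n)
    as [t [HKt Ht]].
  exists K.
  replace t with ((t - K) + K)%nat in Ht by lia.
  rewrite iterate_add, HK in Ht.
  destruct (iterate_T_1 (t - K)); lia.
Qed.

Lemma collatz_of_T_R_converges :
  (forall n : Z, 0 <= n -> reaches T_R n 0) ->
  forall n : Z, 0 < n -> reaches T n 1.
Proof.
  intros converges n Hn.
  assert (Hodd : forall k, 0 <= k -> reaches T (2 * k + 1) 1).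
  { intros k Hk; apply reaches_step; rewrite T_double_add1.
    apply reaches_trans with (3 * 0 + 2).
    - exact (reaches_simulation T T_R (fun x => 3 * x + 2) T_simulates_T_R
               k 0 (converges k Hk)).
    - now exists 1%nat. }
  enough (H : forall x, 0 <= x -> 0 < x -> reaches T x 1) by (apply H; lia).
  apply (Z_lt_induction (fun x => 0 < x -> reaches T x 1)); intros x IH Hx.
  destruct (Z.Even_or_Odd x) as [[m ->] | [k ->]].
  - apply reaches_step; rewrite T_double; apply IH; lia.
  - apply Hodd; lia.
Qed.

Theorem theorem1 :
  (forall n : Z, 0 < n -> exists k : nat, iterate T k n = 1) <->
  (forall n : Z, 0 <= n -> exists k : nat, iterate T_R k n = 0).
Proof.
  split.
  - exact T_R_converges_of_collatz.
  - exact collatz_of_T_R_converges.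
Qed.
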